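(* Let $\mathcal{G}$ be a strongly connected digraph with $N$ nodes and consider the distributed quantized weight-balancing algorithm described in the context, with step-size $\gamma(k)=2^{-n}$ for $2^n-1\le k\le 2^{n+1}-2$. If at some iteration $k$ one has $\Vert\boldsymbol{\epsilon}(k)\Vert_1\ge 2N(N-1)\gamma(k)$, then the decreasing event $\mathcal{D}_t$ occurs for some integer $t$ with $k\le t\le k+N^{2N}$.
   Context: $\mathcal{G}=(\mathcal{V},\mathcal{E})$, $\mathcal{V}=\{1,\dots,N\}$, no self-loops; $\mathcal{N}_i^-=\{j:(j,i)\in\mathcal{E}\}$, $\mathcal{N}_i^+=\{j:(i,j)\in\mathcal{E}\}$, $d_i^+=|\mathcal{N}_i^+|$. Algorithm: $a_{ij}(0)=1$ if $j\in\mathcal{N}_i^-$ and $0$ otherwise; $b_i(k)=\sum_{j\in\mathcal{N}_i^-}a_{ij}(k)-\sum_{j\in\mathcal{N}_i^+}a_{ji}(k)$; $n_i(k)=1$ if $b_i(k)\ge d_i^+\gamma(k)$, else $0$; $a_{ij}(k+1)=a_{ij}(k)+n_j(k)\gamma(k)$ for $j\in\mathcal{N}_i^-$. $\boldsymbol{\epsilon}(k)=(|b_i(k)|)_{i=1}^N$. The decreasing event $\mathcal{D}_k$ is: there exist $i\in\mathcal{V}$ and $j\in\mathcal{N}_i^+$ with $n_i(k)>0$ and $b_j(k)<0$. *)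

From mathcomp Require Import all_boot all_order all_algebra.
Set Implicit Arguments. Unset Strict Implicit. Unset Printing Implicit Defensive.
Import Order.TTheory GRing.Theory Num.Theory.
Local Open Scope ring_scope.

Section Algo.
Variables (R : realFieldType) (N : nat) (e : rel 'I_N).
(* e u v  <->  (u,v) is an edge of the digraph; nodes are 'I_N = {0,..,N-1}. *)

(* step size: gamma(k) = 2^-n  where 2^n - 1 <= k <= 2^(n+1) - 2,
   i.e. n = floor(log2 (k+1)) = trunc_log 2 k.+1 *)
Definition gam (k : nat) : R := (2%:R ^+ trunc_log 2 k.+1)^-1.

Definition outdeg (i : 'I_N) : nat := #|[pred j | e i j]|.

(* a i j = a_ij = weight of edge (j,i), meaningful for j in N_i^- *)
Definition bal (a : 'I_N -> 'I_N -> R) (i : 'I_N) : R :=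
  \sum_(j | e j i) a i j - \sum_(j | e i j) a j i.

Definition nflag (a : 'I_N -> 'I_N -> R) (k : nat) (i : 'I_N) : bool :=
  (outdeg i)%:R * gam k <= bal a i.

Fixpoint wts (k : nat) : 'I_N -> 'I_N -> R :=
  match k with
  | 0 => fun i j => if e j i then 1 else 0
  | k'.+1 => fun i j =>
      if e j i then wts k' i j + (if nflag (wts k') k' j then gam k' else 0)
      else wts k' i j
  end.

Definition b (k : nat) (i : 'I_N) : R := bal (wts k) i.
Definition nn (k : nat) (i : 'I_N) : bool := nflag (wts k) k i.
Definition eps_norm1 (k : nat) : R := \sum_i `|b k i|.

Definition decreasing_event (k : nat) : Prop :=
  exists i j, [/\ e i j, nn k i & b k j < 0].
End Algo.

From mathcomp Require Import all_boot all_order all_algebra.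
From mathcomp Require Import ring lra zify.
From Stdlib Require Import Classical_Prop.
Set Implicit Arguments. Unset Strict Implicit. Unset Printing Implicit Defensive.
Import Order.TTheory GRing.Theory Num.Theory.
Local Open Scope ring_scope.

(* Suppose no decreasing event occurs during L steps from time k.  A node with
   negative balance at time k then never fires and none of its in-neighbours
   fires, so its balance is frozen; nonnegative balances stay nonnegative.
   Hence the positive mass, half of ||eps(k)||_1 >= 2N(N-1)gamma(k), is
   conserved, and since an idle node has balance below (N-1)gamma, some node
   fires at every step.  On the other hand, along an edge x -> u, each firing
   of x adds at least one to b_u/gamma, which stays below N-1 while u is idle:
   x fires at most (N+1)(#firings of u) + N times, and never if b_u(k) < 0.
   Following a shortest path to a negative node, every node fires fewer than
   (N+1)^(N-1) times, so L < N (N+1)^(N-1) <= N^(2N). *)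

Section Balances.
Variables (R : realFieldType) (N : nat) (e : rel 'I_N).
Local Notation g := (gam R).
Local Notation b := (b R e).
Local Notation nn := (nn R e).
Local Notation d := (outdeg e).

Lemma gam_gt0 t : 0 < g t.
Proof. by rewrite /gam invr_gt0 exprn_gt0 // ltr0n. Qed.

Lemma gam_le s t : (s <= t)%N -> g t <= g s.
Proof.
move=> le_st; rewrite /gam lef_pV2 ?posrE ?exprn_gt0 ?ltr0n //.
by rewrite ler_eXn2l ?ltr1n // leq_trunc_log.
Qed.

Lemma bal_sum0 (a : 'I_N -> 'I_N -> R) : \sum_i bal e a i = 0.
Proof. by rewrite /bal sumrB (exchange_big_dep xpredT) //= subrr. Qed.

Lemma b_succ t i : b t.+1 i =
  b t i + \sum_(j | e j i) (if nn t j then g t else 0)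
        - (if nn t i then (d i)%:R * g t else 0).
Proof.
rewrite /b /bal /=.
rewrite (eq_bigr (fun j => wts R e t i j + (if nn t j then g t else 0))); last first.
  by move=> j ->.
rewrite (eq_bigr (fun j => wts R e t j i + (if nn t i then g t else 0))
           (P := fun j => e i j)); last by move=> j ->.
rewrite !big_split /= (@sumr_const _ _ [pred j | e i j]) /outdeg.
have -> : (if nn t i then g t else 0) *+ #|[pred j | e i j]|
          = (if nn t i then #|[pred j | e i j]|%:R * g t else 0).
  by case: (nn t i); rewrite ?mul0rn // mulr_natl.
rewrite /nn; set A := \sum_(_ < N | _) _; set B := \sum_(_ < N | _) _.
set C := \sum_(_ < N | _) _; set D := (if _ then _ else _).
ring.
Qed.

Lemma b_lt0_nn t i : b t i < 0 -> ~~ nn t i.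
Proof.
move=> lt0; rewrite /nn /nflag -ltNge (lt_le_trans lt0) //.
by rewrite mulr_ge0 ?ler0n // ltW // gam_gt0.
Qed.

Lemma b_succ_ge0 t i : 0 <= b t i -> 0 <= b t.+1 i.
Proof.
move=> ge0; have in_ge0 : 0 <= \sum_(j | e j i) (if nn t j then g t else 0).
  by apply: sumr_ge0 => j _; case: ifP => // _; exact/ltW/gam_gt0.
rewrite b_succ; case: ifP => [fire | _]; last by rewrite subr0 addr_ge0.
have : (d i)%:R * g t <= b t i := fire.
lra.
Qed.

Lemma b_ge0_le s t i : (s <= t)%N -> 0 <= b s i -> 0 <= b t i.
Proof.
move=> /subnKC <-; elim: (t - s)%N => [|m IH] ge0; first by rewrite addn0.
by rewrite addnS b_succ_ge0 ?IH.
Qed.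

Lemma scaled_b_succ t x u : e x u -> 0 <= b t.+1 u ->
  b t u / g t + (nn t x)%:R - (if nn t u then (d u)%:R else 0)
    <= b t.+1 u / g t.+1.
Proof.
move=> exu ge0; have gt0 := gam_gt0 t.
have in_ge : (if nn t x then g t else 0)
             <= \sum_(j | e j u) (if nn t j then g t else 0).
  rewrite (bigD1 x) //= lerDl; apply: sumr_ge0 => j _.
  by case: ifP => // _; exact: ltW.
apply: (@le_trans _ _ (b t.+1 u / g t)); last first.
  by rewrite ler_wpM2l // lef_pV2 ?posrE ?gam_gt0 ?gam_le.
rewrite ler_pdivlMr // b_succ.
have -> : (b t u / g t + (nn t x)%:R - (if nn t u then (d u)%:R else 0)) * g t
  = b t u + (if nn t x then g t else 0) - (if nn t u then (d u)%:R * g t else 0).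
  by case: (nn t x); case: (nn t u); rewrite /=; field; rewrite gt_eqF.
by rewrite lerD2r lerD2l.
Qed.

Lemma eps_norm1E t : eps_norm1 R e t = 2 * \sum_(j | 0 <= b t j) b t j.
Proof.
have sum0 : \sum_j b t j = 0 by exact: bal_sum0.
rewrite (bigID (fun j => 0 <= b t j)) /= in sum0.
rewrite /eps_norm1 (bigID (fun j => 0 <= b t j)) /=.
rewrite [X in X + _](eq_bigr (fun j => b t j)); last by move=> j /ger0_norm.
rewrite [X in _ + X](eq_bigr (fun j => - b t j)); last first.
  by move=> j neg; rewrite ltr0_norm // ltNge.
rewrite sumrN; lra.
Qed.

Lemma exists_b_lt0 t : 0 < eps_norm1 R e t -> exists j, b t j < 0.
Proof.
have [j lt0 | all_ge0] := pickP (fun j => b t j < 0); first by exists j.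
rewrite eps_norm1E (eq_bigl xpredT); last by move=> j; rewrite /= leNgt all_ge0.
by rewrite [X in 2 * X]bal_sum0 mulr0 ltxx.
Qed.

Hypothesis irr : irreflexive e.

Lemma outdeg_le i : (d i <= N.-1)%N.
Proof.
rewrite /outdeg -[N in (_ <= N.-1)%N]card_ord -(cardC1 i).
apply: subset_leq_card; apply/subsetP => j; rewrite !inE => eij.
by apply/eqP => ji; rewrite ji irr in eij.
Qed.

Lemma b_lt_not_nn t i : ~~ nn t i -> b t i < (N.-1)%:R * g t.
Proof.
rewrite /nn /nflag -ltNge => lt; apply: (lt_le_trans lt).
by rewrite ler_wpM2r ?ler_nat ?outdeg_le // ltW // gam_gt0.
Qed.

Section Firings.
Variable k : nat.

Definition firings (x : 'I_N) (m : nat) : nat := count (fun t => nn t x) (iota k m).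

Lemma firings_S x m : firings x m.+1 = (firings x m + nn (k + m) x)%N.
Proof. by rewrite /firings -addn1 iotaD count_cat /= addn0. Qed.

(* The clipped term min(b_u/gamma, N) drops by at most N when u fires, which
   the factor N + 1 absorbs. *)
Lemma firings_edge x u m : e x u -> 0 <= b k u ->
  (firings x m)%:R
    <= N.+1%:R * (firings u m)%:R + Num.min (b (k + m) u / g (k + m)) N%:R.
Proof.
move=> exu u_ge0; elim: m => [|m IH].
  rewrite /firings /= mulr0 add0r le_min ler0n andbT addn0.
  by rewrite divr_ge0 // ltW // gam_gt0.
rewrite !firings_S !natrD addnS -natr1; rewrite -natr1 in IH.
set t := (k + m)%N in IH *.
have bt_ge0 : 0 <= b t u := b_ge0_le (leq_addr m k) u_ge0.
have bt1_ge0 : 0 <= b t.+1 u := b_succ_ge0 bt_ge0.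
have step := scaled_b_succ exu bt1_ge0.
set s0 := b t u / g t in IH step *; set s1 := b t.+1 u / g t.+1 in step *.
have s1_ge0 : 0 <= s1 by rewrite divr_ge0 // ltW // gam_gt0.
have nx_le1 : ((nn t x : nat)%:R : R) <= 1 by case: (nn t x).
set Fx := (firings x m)%:R in IH *; set Fu := (firings u m)%:R in IH *.
set A := N%:R * Fu in IH *.
have min_le : Num.min s0 N%:R <= N%:R by rewrite ge_min lexx orbT.
have min_ge0 : 0 <= Num.min s1 N%:R by rewrite le_min s1_ge0 ler0n.
case: (boolP (nn t u)) => [fire_u | idle_u] in step *.
  rewrite /= mulrDr mulrDl mulr1 mul1r -/A in IH *; lra.
have s0_lt : s0 < (N.-1)%:R by rewrite ltr_pdivrMr ?gam_gt0 ?b_lt_not_nn.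
have N_eq : (N.-1)%:R + 1 = N%:R :> R.
  by rewrite natr1 prednK // (leq_trans _ (ltn_ord u)).
have min_s0 : Num.min s0 N%:R = s0 by apply/min_idPl; lra.
have : s0 + (nn t x)%:R <= Num.min s1 N%:R by rewrite le_min; apply/andP; split; lra.
rewrite /= mulr0n addr0 mulrDl mul1r -/A min_s0 in IH *; lra.
Qed.

Section Window.
Variable L : nat.
Hypothesis no_event : forall m, (m < L)%N -> ~ decreasing_event R e (k + m).

Lemma b_lt0_window j m : b k j < 0 -> (m <= L)%N -> b (k + m) j = b k j.
Proof.
move=> neg; elim: m => [|m IH] mL; first by rewrite addn0.
have bj := IH (ltnW mL); rewrite addnS b_succ bj.
rewrite (negbTE (b_lt0_nn _)) ?bj // subr0 big1 ?addr0 // => i eij.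
case: ifP => // fire_i; case: (no_event mL).
by exists i, j; split; rewrite ?bj.
Qed.

Lemma firings_lt0 x m : b k x < 0 -> (m <= L)%N -> firings x m = 0%N.
Proof.
move=> neg; elim: m => [|m IH] mL //.
by rewrite firings_S IH ?(ltnW mL) // (negbTE (b_lt0_nn _)) ?b_lt0_window ?(ltnW mL).
Qed.

Lemma firings_to_lt0 x u m : e x u -> b k u < 0 -> (m <= L)%N -> firings x m = 0%N.
Proof.
move=> exu neg; elim: m => [|m IH] mL //.
rewrite firings_S IH ?(ltnW mL) //; case fire_x: (nn (k + m) x) => //.
case: (no_event mL).
by exists x, u; split; rewrite ?b_lt0_window ?(ltnW mL).
Qed.

Lemma pos_mass_window m : (m <= L)%N ->
  \sum_(j | 0 <= b k j) b (k + m) j = \sum_(j | 0 <= b k j) b k j.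
Proof.
move=> mL.
have sum0 t : \sum_(j | 0 <= b k j) b t j + \sum_(j | ~~ (0 <= b k j)) b t j = 0.
  by have := bal_sum0 (wts R e t); rewrite (bigID (fun j => 0 <= b k j)).
have neg_frozen : \sum_(j | ~~ (0 <= b k j)) b (k + m) j
                  = \sum_(j | ~~ (0 <= b k j)) b k j.
  by apply: eq_bigr => j; rewrite -ltNge => neg; rewrite b_lt0_window.
have := sum0 (k + m)%N; have := sum0 k; rewrite neg_frozen; lra.
Qed.

Lemma firings_edge_window x u : e x u -> (firings x L <= N.+1 * firings u L + N)%N.
Proof.
move=> exu; case: (ltP (b k u) 0) => [neg | nonneg].
  by rewrite (firings_to_lt0 exu neg).
rewrite -(ler_nat R) natrD natrM.
apply: (le_trans (firings_edge L exu nonneg)); rewrite lerD2l.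
by rewrite ge_min lexx orbT.
Qed.

Lemma firings_path x p : path e x p -> b k (last x p) < 0 ->
  (firings x L < N.+1 ^ size p)%N.
Proof.
elim: p x => [|y p IH] x /=; first by move=> _ neg; rewrite firings_lt0.
move=> /andP[exy yp] neg; apply: leq_ltn_trans (firings_edge_window exy) _.
by rewrite expnS -addnS addnC -mulnS leq_mul2l IH.
Qed.

Hypothesis N_ge2 : (2 <= N)%N.
Hypothesis eps_large : (2 * N * (N - 1))%:R * g k <= eps_norm1 R e k.

Lemma exists_b_lt0_start : exists j, b k j < 0.
Proof.
apply: exists_b_lt0; apply: lt_le_trans eps_large.
by rewrite mulr_gt0 ?gam_gt0 // ltr0n !muln_gt0 subn_gt0 N_ge2 (ltnW N_ge2).
Qed.

(* The mass N(N-1)gamma(k) cannot fit below the idle threshold (N-1)gamma(t)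
   on the at most N-1 nonnegative nodes. *)
Lemma nn_window m : (m < L)%N -> exists i, nn (k + m) i.
Proof.
move=> mL; have [i fire | idle] := pickP (nn (k + m)); first by exists i.
exfalso; set t := (k + m)%N in idle.
have N1_gt0 : (0 < N.-1)%N by rewrite -subn1 subn_gt0.
have [j0 neg0] := exists_b_lt0_start.
have card_pos : (#|[pred j | (0 <= b k j)%R]| <= N.-1)%N.
  rewrite -[X in (_ <= X.-1)%N](card_ord N) -(cardC1 j0); apply: subset_leq_card.
  by apply/subsetP => j; rewrite !inE; apply: contraTneq => ->; rewrite -ltNge.
set c := (N.-1)%:R * g t.
have c_gt0 : 0 < c by rewrite mulr_gt0 ?gam_gt0 ?ltr0n.
have mass_le : \sum_(j | 0 <= b k j) b t j <= (N.-1)%:R * c.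
  apply: (@le_trans _ _ (\sum_(j | 0 <= b k j) c)).
    by apply: ler_sum => j _; apply/ltW/b_lt_not_nn; rewrite idle.
  rewrite (@sumr_const _ _ [pred j | 0 <= b k j]) -[X in X <= _]mulr_natl.
  by rewrite ler_wpM2r ?ler_nat // ltW.
have mass_ge : N%:R * c <= \sum_(j | 0 <= b k j) b t j.
  rewrite pos_mass_window; last exact: ltnW.
  have gtk : g t <= g k by rewrite gam_le ?leq_addr.
  move: eps_large; rewrite eps_norm1E !natrM subn1 /c.
  have : N%:R * (N.-1)%:R * g t <= N%:R * (N.-1)%:R * g k.
    by rewrite ler_wpM2l ?mulr_ge0 ?ler0n.
  lra.
have : N%:R * c <= (N.-1)%:R * c := le_trans mass_ge mass_le.
rewrite ler_pM2r // ler_nat; lia.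
Qed.

Lemma firings_sum_ge m : (m <= L)%N -> (m <= \sum_i firings i m)%N.
Proof.
elim: m => [|m IH] mL //; have [i fire] := nn_window mL.
rewrite (eq_bigr _ (fun i _ => firings_S i m)) big_split /=.
rewrite [X in (_ + X)%N](bigD1 i) //= fire.
by rewrite add1n addnS ltnS (leq_trans (IH (ltnW mL))) ?leq_addr.
Qed.

Hypothesis connected : forall i j, connect e i j.

Lemma firings_lt x : (firings x L < N.+1 ^ N.-1)%N.
Proof.
have [j0 neg0] := exists_b_lt0_start.
have /connectP[p xp last_p] := connected x j0; rewrite last_p in neg0.
case: (shortenP xp) neg0 => p' xp' uniq_p' _ neg0.
apply: leq_trans (firings_path xp' neg0) _; rewrite leq_pexp2l //.
rewrite -ltnS prednK ?(ltnW N_ge2) // -[(size p').+1]/(size (x :: p')).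
by rewrite -(card_uniqP uniq_p') -[X in (_ <= X)%N](card_ord N) max_card.
Qed.

Lemma window_lt : (L < N * N.+1 ^ N.-1)%N.
Proof.
have sum_le : (\sum_i firings i L <= \sum_(i < N) (N.+1 ^ N.-1).-1)%N.
  by apply: leq_sum => i _; rewrite -ltnS prednK ?expn_gt0 ?firings_lt.
rewrite sum_nat_const card_ord in sum_le.
apply: leq_ltn_trans (leq_trans (firings_sum_ge (leqnn L)) sum_le) _.
by rewrite ltn_pmul2l ?ltn_predL ?expn_gt0 // ltnW.
Qed.

End Window.
End Firings.
End Balances.

Lemma mul_expS_leq_exp_double N : (2 <= N)%N -> (N * N.+1 ^ N.-1 <= N ^ (2 * N))%N.
Proof.
move=> N_ge2; have N1_gt0 : (0 < N.-1)%N by rewrite -subn1 subn_gt0.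
have S_le_sq : (N.+1 <= N ^ 2)%N by rewrite expnS expn1; nia.
apply: (@leq_trans (N * (N ^ 2) ^ N.-1)).
  by rewrite leq_mul2l leq_exp2r ?S_le_sq ?orbT.
by rewrite -expnM -expnS leq_pexp2l ?(ltnW N_ge2) //; lia.
Qed.

Theorem proposition1 (R : realFieldType) (N : nat) (e : rel 'I_N) :
  (2 <= N)%N ->
  irreflexive e ->
  (forall i j, fingraph.connect e i j) ->
  forall k : nat,
    (2 * N * (N - 1))%:R * gam R k <= eps_norm1 R e k ->
    exists t : nat, (k <= t <= k + N ^ (2 * N))%N /\ decreasing_event R e t.
Proof.
move=> N_ge2 irr connected k eps_large; apply: NNPP => no_event_in_window.
have no_event m : (m < N ^ (2 * N))%N -> ~ decreasing_event R e (k + m).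
  move=> mL event; apply: no_event_in_window; exists (k + m)%N.
  by rewrite leq_addr leq_add2l ltnW.
have := window_lt irr no_event N_ge2 eps_large connected.
by rewrite ltnNge mul_expS_leq_exp_double.
Qed.
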